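(* For every $m\ge1$ there is a market with $m$ items and $m+1$ unit-demand buyers whose minimum Walrasian revenue is $m$, and for which there exist a selling order of the items and a subgame perfect equilibrium of the sequential first-price auction with revenue $1$.
   Context: Unit demand: buyer $i$ has values $v_{i,j}\ge0$ and $v_i(S)=\max_{j\in S}v_{i,j}$, $v_i(\emptyset)=0$; utility is quasi-linear. A Walrasian equilibrium is a price vector $p\ge0$ and an allocation of every item to a buyer such that each buyer's bundle maximizes $v_i(T)-\sum_{j\in T}p_j$ over all bundles $T$; a minimum Walrasian equilibrium has prices coordinatewise at most those of every Walrasian equilibrium, and the minimum Walrasian revenue is the sum of its prices. In a sequential first-price auction the items are sold one at a time in the given order, each by a sealed-bid first-price auction without reserve price (highest bidder wins, ties broken by a seller-chosen rule, winner pays his bid). Full information. A subgame perfect equilibrium is a (pure) strategy profile that is a Nash equilibrium in every subgame; its revenue is the total payment on the equilibrium path. *)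

From HB Require Import structures.
From mathcomp Require Import all_boot all_order all_algebra all_fingroup.
From mathcomp Require Import reals.
Set Implicit Arguments. Unset Strict Implicit. Unset Printing Implicit Defensive.
Import Order.TTheory GRing.Theory Num.Theory.
Local Open Scope ring_scope.

Section Market.
Variables (R : realType) (n m : nat).
(* buyers are 'I_n, items are 'I_m; v i j = value of buyer i for item j *)
Variable v : 'I_n -> 'I_m -> R.

Definition ud_val (i : 'I_n) (S : {set 'I_m}) : R :=
  if S == set0 then 0 else \big[Num.max/0]_(j in S) v i j.

Definition walrasian (p : 'I_m -> R) (alloc : 'I_m -> 'I_n) : Prop :=
  (forall j, 0 <= p j) /\
  forall i : 'I_n, forall T : {set 'I_m},
    ud_val i T - \sum_(j in T) p j <=
    ud_val i [set j | alloc j == i] - \sum_(j in [set j | alloc j == i]) p j.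

Definition min_walrasian_prices (p : 'I_m -> R) : Prop :=
  (exists alloc, walrasian p alloc) /\
  forall p' alloc', walrasian p' alloc' -> forall j, p j <= p' j.

(* a bid profile of one stage; a history is the sequence of bid profiles of
   the stages already played (full information: all bids are observed) *)
Definition profile := 'I_n -> R.
Definition history := seq profile.
Definition strategy := history -> R.   (* bid at the stage size h, given h *)

Definition prof0 : profile := fun _ => 0.

Definition tiebreak := history -> profile -> 'I_n.
Definition valid_tiebreak (tb : tiebreak) : Prop :=
  forall h b i, b i <= b (tb h b).

Definition valid_strategy (d : strategy) : Prop := forall h, 0 <= d h.
Definition valid_history (h : history) : Prop :=
  forall k, (k < size h)%N -> forall i, 0 <= nth prof0 h k i.

Variables (sigma : {perm 'I_m}) (tb : tiebreak).

(* at stage k, item sigma k is sold *)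
Definition winner (H : history) (k : 'I_m) : 'I_n :=
  tb (take k H) (nth prof0 H k).
Definition price (H : history) (k : 'I_m) : R :=
  nth prof0 H k (winner H k).

Definition won (H : history) (i : 'I_n) : {set 'I_m} :=
  [set j | [exists k : 'I_m, (sigma k == j) && (winner H k == i)]].

Definition utility (H : history) (i : 'I_n) : R :=
  ud_val i (won H i) - \sum_(k < m | winner H k == i) price H k.

Fixpoint extend (s : 'I_n -> strategy) (r : nat) (h : history) : history :=
  match r with
  | 0 => h
  | r'.+1 => extend s r' (rcons h (fun i => s i h))
  end.

Definition play (s : 'I_n -> strategy) (h : history) : history :=
  extend s (m - size h) h.

Definition upd (s : 'I_n -> strategy) (i : 'I_n) (d : strategy) :
  'I_n -> strategy := fun j => if j == i then d else s j.

Definition SPE (s : 'I_n -> strategy) : Prop :=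
  (forall i, valid_strategy (s i)) /\
  forall h : history, valid_history h -> (size h < m)%N ->
  forall (i : 'I_n) (d : strategy), valid_strategy d ->
    utility (play (upd s i d) h) i <= utility (play s h) i.

Definition revenue (s : 'I_n -> strategy) : R :=
  \sum_(k < m) price (play s [::]) k.

End Market.

From Pilot Require Import Defs.
From HB Require Import structures.
From mathcomp Require Import all_boot all_order all_algebra all_fingroup.
From mathcomp Require Import reals lra.
Import Order.TTheory GRing.Theory Num.Theory.
Local Open Scope ring_scope.
Set Implicit Arguments. Unset Strict Implicit. Unset Printing Implicit Defensive.

(* Buyer [greedy] values every item at 1 and buyer [single k] values only
   item k, at 1. Prices 1 support the allocation of item k to [single k], and
   no Walrasian price can be below 1, so the minimum Walrasian revenue is m.
   In the auction, as long as the greedy buyer has won nothing, it and the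
   single-minded buyer of the current item bid 1 and the seller favours the
   greedy buyer; afterwards everybody bids 0 and each remaining item goes to
   its single-minded buyer for free, so the revenue is 1. Since no bundle is
   worth more than 1, no deviation pays: a single-minded buyer can take its
   item from the greedy buyer only by bidding at least 1, and a deviating
   greedy buyer pays at least 1 for the first item it wins, against the bid 1
   of that item's single-minded buyer. *)

Section Extend.
Variables (R : realType) (n : nat) (s : 'I_n -> strategy R n).
Notation p0 := (@prof0 R n).
Implicit Types (h : history R n).

Lemma size_extend r h : size (extend s r h) = (size h + r)%N.
Proof. by elim: r h => [|r IH] h /=; rewrite ?addn0 // IH size_rcons addSnnS. Qed.

Lemma take_extend r h k : (k <= size h)%N -> take k (extend s r h) = take k h.
Proof.
elim: r h => [|r IH] h hk //=.
by rewrite IH ?size_rcons ?(leq_trans hk) // -cats1 takel_cat.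
Qed.

Lemma nth_extend_old r h k :
  (k < size h)%N -> nth p0 (extend s r h) k = nth p0 h k.
Proof.
by move=> hk; rewrite -(nth_take _ hk) (take_extend _ (leqnn _)) take_size.
Qed.

Lemma nth_extend_new r h k : (size h <= k < size h + r)%N ->
  nth p0 (extend s r h) k = (fun i => s i (take k (extend s r h))).
Proof.
elim: r h => [|r IH] h /andP[hk kr]; first by rewrite addn0 ltnNge hk in kr.
rewrite /=; case: (ltngtP (size h) k) hk => // [hk|<-] _.
  by rewrite IH // size_rcons hk addSnnS.
rewrite nth_extend_old ?size_rcons // nth_rcons ltnn eqxx.
by rewrite take_extend ?size_rcons // -cats1 take_size_cat.
Qed.

End Extend.

Section Valuations.
Variables (R : realType) (n m : nat) (v : 'I_n -> 'I_m -> R).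
Implicit Types (i : 'I_n) (S : {set 'I_m}).

Lemma ud_val_set0 i : ud_val v i set0 = 0.
Proof. by rewrite /ud_val eqxx. Qed.

Lemma ud_val_le i S c : 0 <= c -> {in S, forall j, v i j <= c} ->
  ud_val v i S <= c.
Proof. by move=> c_ge0 vS; rewrite /ud_val; case: ifP => // _; apply: bigmax_le. Qed.

Lemma le_ud_val i S j : j \in S -> v i j <= ud_val v i S.
Proof.
move=> jS; rewrite /ud_val; case: eqP => [S0|_]; last exact: le_bigmax_cond.
by rewrite S0 inE in jS.
Qed.

Lemma ud_val_ge0 i S : (forall j, 0 <= v i j) -> 0 <= ud_val v i S.
Proof.
move=> v_ge0; rewrite /ud_val; case: ifP => // _.
by elim/big_ind: _ => // x y x_ge0 _; rewrite le_max x_ge0.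
Qed.

Lemma sum_bundles (alloc : 'I_m -> 'I_n) (F : 'I_m -> R) :
  \sum_i \sum_(j in [set j | alloc j == i]) F j = \sum_j F j.
Proof.
rewrite (partition_big alloc xpredT) //=; apply: eq_bigr => i _.
by apply: eq_bigl => j; rewrite inE.
Qed.

End Valuations.

Section Auction.
Variables (R : realType) (n m : nat) (tb : tiebreak R n).
Notation p0 := (@prof0 R n).
Implicit Types (H h : history R n) (s : 'I_n -> strategy R n) (i : 'I_n).

Lemma winner_take H t (k : 'I_m) :
  (k < t)%N -> winner tb (take t H) k = winner tb H k.
Proof. by move=> kt; rewrite /winner take_takel ?(ltnW kt) // nth_take. Qed.

Lemma mem_won1 H i (j : 'I_m) : (j \in won 1 tb H i) = (winner tb H j == i).
Proof.
rewrite inE; apply/existsP/idP => [[k /andP[/eqP <- wk]]|wj]; first by rewrite perm1.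
by exists j; rewrite perm1 eqxx.
Qed.

Lemma upd_valid s i d : (forall j, valid_strategy (s j)) -> valid_strategy d ->
  forall j, valid_strategy (upd s i d j).
Proof. by move=> s_valid d_valid j; rewrite /upd; case: eqP. Qed.

Section Play.
Variables (s : 'I_n -> strategy R n) (h : history R n).
Hypothesis h_le : (size h <= m)%N.

Lemma size_play : size (play m s h) = m.
Proof. by rewrite size_extend subnKC. Qed.

Lemma leq_size_play (k : 'I_m) : (k <= size (play m s h))%N.
Proof. by rewrite size_play // ltnW. Qed.

Lemma take_play : take (size h) (play m s h) = h.
Proof. by rewrite take_extend // take_size. Qed.

Lemma nth_play_new k : (size h <= k < m)%N ->
  nth p0 (play m s h) k = (fun i => s i (take k (play m s h))).
Proof. by move=> hk; apply: nth_extend_new; rewrite subnKC. Qed.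

Lemma winner_play_old (k : 'I_m) :
  (k < size h)%N -> winner tb (play m s h) k = winner tb h k.
Proof. by move=> hk; rewrite -(winner_take _ hk) take_play. Qed.

Lemma price_play_old (k : 'I_m) :
  (k < size h)%N -> price tb (play m s h) k = price tb h k.
Proof.
by move=> hk; rewrite /price -/(winner _ _ _) winner_play_old // nth_extend_old.
Qed.

Lemma play_bids_ge0 : (forall i, valid_strategy (s i)) ->
  forall (k : 'I_m) j, (size h <= k)%N -> 0 <= nth p0 (play m s h) k j.
Proof.
by move=> s_valid k j hk; rewrite nth_play_new ?hk ?ltn_ord //; apply: s_valid.
Qed.

End Play.

Definition paid_before k0 H i :=
  \sum_(k < m | (k < k0)%N && (winner tb H k == i)) price tb H k.
Definition paid_from k0 H i :=
  \sum_(k < m | (k0 <= k)%N && (winner tb H k == i)) price tb H k.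

Definition utility_from (v : 'I_n -> 'I_m -> R) (sigma : {perm 'I_m}) k0 H i :=
  ud_val v i (won sigma tb H i) - paid_from k0 H i.

Lemma utility_split v sigma k0 H i :
  utility v sigma tb H i = utility_from v sigma k0 H i - paid_before k0 H i.
Proof.
rewrite /utility /utility_from /paid_before /paid_from.
rewrite (bigID (fun k : 'I_m => (k < k0)%N)) /= opprD addrA addrAC.
by congr (_ - _ - _); apply: eq_bigl => k; rewrite andbC -?leqNgt.
Qed.

Lemma paid_before_play s s' h i :
  paid_before (size h) (play m s h) i = paid_before (size h) (play m s' h) i.
Proof.
apply: eq_big => [k|k /andP[hk _]]; last by rewrite !price_play_old.
by case: ltnP => hk //=; rewrite !winner_play_old.
Qed.

Lemma utility_play_le v sigma s s' h i :
  utility_from v sigma (size h) (play m s' h) i <=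
    utility_from v sigma (size h) (play m s h) i ->
  utility v sigma tb (play m s' h) i <= utility v sigma tb (play m s h) i.
Proof.
by move=> le_from; rewrite !(utility_split _ _ (size h)) (paid_before_play s' s) lerD2r.
Qed.

Section PaidFrom.
Variables (H : history R n) (k0 : nat).
Hypothesis bids_ge0 : forall (k : 'I_m) j, (k0 <= k)%N -> 0 <= nth p0 H k j.

Lemma paid_from_ge0 i : 0 <= paid_from k0 H i.
Proof. by apply: sumr_ge0 => k /andP[hk _]; apply: bids_ge0. Qed.

(* The winner pays its own bid, which is at least every rival's bid. *)
Lemma le_paid_from (t : 'I_m) i j : valid_tiebreak tb ->
  (k0 <= t)%N -> winner tb H t = i -> nth p0 H t j <= paid_from k0 H i.
Proof.
move=> tb_valid ht wt; apply: le_trans (tb_valid _ _ j) _.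
rewrite /paid_from (bigD1 t) /=; last by rewrite ht wt eqxx.
rewrite -[X in X <= _]addr0; apply: lerD; first exact: lexx.
by apply: sumr_ge0 => k /andP[/andP[hk _] _]; apply: bids_ge0.
Qed.

End PaidFrom.

End Auction.

Section Construction.
Variables (R : realType) (m : nat).
Notation buyer := 'I_m.+1.
Notation hist := (history R m.+1).
Notation p0 := (@prof0 R m.+1).

Definition greedy : buyer := ord_max.
Definition single (k : 'I_m) : buyer := widen_ord (leqnSn m) k.

Variant buyer_spec : buyer -> Type :=
  | BuyerSingle k : buyer_spec (single k)
  | BuyerGreedy : buyer_spec greedy.

Lemma buyerP i : buyer_spec i.
Proof.
case: (unliftP ord_max i) => [k ->|->]; last exact: BuyerGreedy.
have -> : lift ord_max k = single k by apply: val_inj; exact: lift_max.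
exact: BuyerSingle.
Qed.

Lemma single_neq_greedy k : single k != greedy.
Proof. by rewrite -(inj_eq val_inj) /= neq_ltn ltn_ord. Qed.

Lemma single_inj : injective single.
Proof. by move=> k l /(congr1 val) kl; apply: val_inj. Qed.

Lemma inord_single (k : 'I_m) : inord k = single k.
Proof. by apply: val_inj; rewrite /= inordK // ltnS ltnW. Qed.

Definition vals (i : buyer) (j : 'I_m) : R := ((i == greedy) || (i == single j))%:R.

Lemma vals_ge0 i j : 0 <= vals i j.
Proof. exact: ler0n. Qed.

Lemma vals_le1 i j : vals i j <= 1.
Proof. by rewrite lern1 leq_b1. Qed.

Lemma vals_greedy j : vals greedy j = 1.
Proof. by rewrite /vals eqxx. Qed.

Lemma vals_single k j : vals (single k) j = (k == j)%:R.
Proof. by rewrite /vals (negbTE (single_neq_greedy k)) (inj_eq single_inj). Qed.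

Lemma ud_vals_le1 i S : ud_val vals i S <= 1.
Proof. by apply: ud_val_le => // j _; apply: vals_le1. Qed.

Lemma ud_vals_le_card i S : ud_val vals i S <= #|S|%:R.
Proof.
have [->|[j jS]] := set_0Vmem S; first by rewrite ud_val_set0 cards0.
by apply: le_trans (ud_vals_le1 i S) _; rewrite ler1n card_gt0; apply/set0Pn; exists j.
Qed.

Lemma ud_vals_greedy S : ud_val vals greedy S = (S != set0)%:R.
Proof.
have [->|[j jS]] := set_0Vmem S; first by rewrite ud_val_set0 eqxx.
have -> : S != set0 by apply/set0Pn; exists j.
by apply/le_anti; rewrite ud_vals_le1 -(vals_greedy j) le_ud_val.
Qed.

Lemma ud_vals_single k S : ud_val vals (single k) S = (k \in S)%:R.
Proof.
case: (boolP (k \in S)) => kS.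
  have := le_ud_val vals (single k) kS; rewrite vals_single eqxx => ge1.
  by apply/le_anti; rewrite ud_vals_le1 ge1.
apply/le_anti; rewrite ud_val_ge0 ?andbT; last exact: vals_ge0.
apply: ud_val_le => // j jS; rewrite vals_single.
by case: eqP jS kS => // <- ->.
Qed.

Lemma walrasian_unit_prices : walrasian vals (fun=> 1) single.
Proof.
split=> // i T; apply: (@le_trans _ _ 0).
  by rewrite sumr_const subr_le0 ud_vals_le_card.
case: (buyerP i) => [k|].
  have -> : [set j | single j == single k] = [set k].
    by apply/setP => j; rewrite !inE (inj_eq single_inj).
  by rewrite big_set1 ud_vals_single set11 subrr.
have -> : [set j | single j == greedy] = set0.
  by apply/setP => j; rewrite !inE (negbTE (single_neq_greedy j)).
by rewrite big_set0 ud_val_set0 subrr.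
Qed.

(* Each bundle is worth at most its size, so the utilities sum to at most
   m - \sum_j p j; but buyer [single k] can secure 1 - p k by buying item k
   alone, and the greedy buyer can secure 1 - p j0. *)
Lemma walrasian_prices_ge1 p alloc : walrasian vals p alloc -> forall j, 1 <= p j.
Proof.
move=> [_ best] j0.
pose B i := [set j | alloc j == i].
pose U i := ud_val vals i (B i) - \sum_(j in B i) p j.
have U_le : \sum_i U i <= m%:R - \sum_j p j.
  rewrite sumrB (sum_bundles alloc p) lerD2r.
  rewrite -[m in m%:R]card_ord -sumr_const -(sum_bundles alloc (fun=> 1)).
  by apply: ler_sum => i _; rewrite sumr_const ud_vals_le_card.
have U_ge i k : vals i k = 1 -> 1 - p k <= U i.
  move=> vik; apply: le_trans (best i [set k]).
  by rewrite big_set1 lerD2r -vik le_ud_val ?set11.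
have U_sum : \sum_(k < m) (1 - p k) + (1 - p j0) <= \sum_i U i.
  rewrite [X in _ <= X]big_ord_recr lerD //.
    by apply: ler_sum => k _; apply: U_ge; rewrite vals_single eqxx.
  by apply: U_ge; rewrite vals_greedy.
move: U_sum; rewrite sumrB sumr_const card_ord => U_sum.
lra.
Qed.

Definition is_top (b : profile R m.+1) (i : buyer) := [forall j, b j <= b i].

Definition seller_tb : tiebreak R m.+1 := fun h b =>
  if is_top b greedy && (0 < b greedy) then greedy
  else if is_top b (inord (size h)) then inord (size h)
  else [arg max_(i > greedy) b i]%O.

Lemma seller_tb_valid : valid_tiebreak seller_tb.
Proof.
move=> h b i; rewrite /seller_tb.
case: ifP => [/andP[/forallP top _]|_]; first exact: top.
case: ifP => [/forallP top|_]; first exact: top.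
by case: arg_maxP => // j _; apply.
Qed.

Notation winner := (winner seller_tb).
Notation price := (price seller_tb).
Notation paid_from := (paid_from m seller_tb).
Notation won := (won (1 : {perm 'I_m}) seller_tb).
Notation utility_from := (utility_from seller_tb vals (1 : {perm 'I_m})).


Definition greedy_won (h : hist) : bool :=
  [exists k : 'I_m, (k < size h)%N && (winner h k == greedy)].

Definition bidding : buyer -> strategy R m.+1 := fun i h =>
  if greedy_won h then 0 else ((i == greedy) || (val i == size h))%:R.

Lemma bidding_valid i : valid_strategy (bidding i).
Proof. by move=> h; rewrite /bidding; case: ifP. Qed.

Lemma greedy_won_take H t : (t <= size H)%N ->
  greedy_won (take t H) = [exists k : 'I_m, (k < t)%N && (winner H k == greedy)].
Proof.
move=> tH; rewrite /greedy_won size_takel //; apply: eq_existsb => k.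
by case: ltnP => //= kt; rewrite winner_take.
Qed.

Lemma greedy_won_playE s h : (size h <= m)%N ->
  greedy_won h = [exists k : 'I_m, (k < size h)%N && (winner (play m s h) k == greedy)].
Proof. by move=> h_le; rewrite -{1}(take_play m s h) greedy_won_take ?size_play. Qed.

Lemma seller_tb_fresh h : ~~ greedy_won h ->
  seller_tb h (fun i => bidding i h) = greedy.
Proof.
move=> gw; rewrite /seller_tb /bidding (negbTE gw) eqxx ltr01 andbT.
suff -> : is_top (fun i => ((i == greedy) || (val i == size h))%:R) greedy by [].
by apply/forallP => j /=; rewrite eqxx lern1 leq_b1.
Qed.

Lemma seller_tb_after h : greedy_won h ->
  seller_tb h (fun i => bidding i h) = inord (size h).
Proof.
move=> gw; rewrite /seller_tb /bidding gw ltxx andbF.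
by suff -> : is_top (fun=> 0) (inord (size h)) by []; apply/forallP.
Qed.

Section EquilibriumPath.
Variable h : hist.
Hypothesis h_lt : (size h < m)%N.
Let h_le : (size h <= m)%N := ltnW h_lt.
Notation k0 := (Ordinal h_lt).
Notation H := (play m bidding h).

Lemma bidding_stage (k : 'I_m) : (size h <= k)%N ->
  winner H k = (if greedy_won (take k H) then single k else greedy) /\
  price H k = (~~ greedy_won (take k H))%:R.
Proof.
move=> hk; rewrite /price /Defs.winner nth_play_new ?hk ?h_le ?ltn_ord //.
case: (boolP (greedy_won _)) => gw.
  rewrite seller_tb_after // size_takel ?leq_size_play ?h_le //.
  by rewrite inord_single /bidding gw.
by rewrite seller_tb_fresh // /bidding (negbTE gw) eqxx.
Qed.

Lemma bidding_first : ~~ greedy_won h -> winner H k0 = greedy /\ price H k0 = 1.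
Proof.
by move=> gw; have := @bidding_stage k0 (leqnn _); rewrite take_play (negbTE gw).
Qed.

Lemma greedy_won_bidding (k : 'I_m) : (size h <= k)%N ->
  greedy_won (take k H) = greedy_won h || (size h < k)%N.
Proof.
move=> hk; rewrite greedy_won_take ?leq_size_play ?h_le //.
case: (ltngtP (size h) k) hk => [hk' _|//|ek _]; last first.
  by rewrite orbF (greedy_won_playE bidding h_le) ek.
rewrite orbT; apply/existsP; case: (boolP (greedy_won h)) => gw.
  move: gw; rewrite (greedy_won_playE bidding h_le) => /existsP[t /andP[th wt]].
  by exists t; rewrite wt (ltn_trans th hk').
by exists k0; rewrite hk' (bidding_first gw).1 eqxx.
Qed.

Lemma bidding_later (k : 'I_m) : (size h <= k)%N -> greedy_won h || (size h < k)%N ->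
  winner H k = single k /\ price H k = 0.
Proof.
by move=> hk later; have := bidding_stage hk; rewrite greedy_won_bidding // later.
Qed.

Lemma paid_from_bidding i :
  paid_from (size h) H i = ((i == greedy) && ~~ greedy_won h)%:R.
Proof.
have later (k : 'I_m) : (size h <= k)%N -> greedy_won h || (k != k0) -> price H k = 0.
  move=> hk gk; apply: (bidding_later hk _).2.
  by case: (greedy_won h) gk => //= kk0; rewrite ltn_neqAle hk andbT eq_sym.
case: (boolP (greedy_won h)) => gw /=.
  by rewrite andbF; apply: big1 => k /andP[hk _]; apply: later; rewrite ?gw.
have [w0 pr0] := bidding_first gw.
rewrite andbT; case: eqP => [->|ig].
  rewrite /paid_from (bigD1 k0) /=; last by rewrite leqnn w0 eqxx.
  rewrite pr0 big1 ?addr0 // => k /andP[/andP[hk _] kk0].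
  by apply: later => //; apply/orP; right.
apply: big1 => k /andP[hk /eqP wk]; apply: later hk _; rewrite (negbTE gw) /=.
by apply/eqP => kk0; apply: ig; rewrite -wk kk0 w0.
Qed.

Lemma utility_from_bidding_greedy :
  utility_from (size h) H greedy = (greedy_won h)%:R.
Proof.
rewrite /utility_from paid_from_bidding eqxx ud_vals_greedy.
have -> : won H greedy != set0.
  case: (boolP (greedy_won h)) => gw; apply/set0Pn.
    move: gw; rewrite (greedy_won_playE bidding h_le) => /existsP[t /andP[_ wt]].
    by exists t; rewrite mem_won1.
  by exists k0; rewrite mem_won1 (bidding_first gw).1.
by case: (greedy_won h); rewrite /= ?subr0 ?subrr.
Qed.

End EquilibriumPath.

Section Deviation.
Variables (h : hist) (d : strategy R m.+1).
Hypotheses (h_lt : (size h < m)%N) (d_valid : valid_strategy d).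
Let h_le : (size h <= m)%N := ltnW h_lt.

Lemma deviation_bids_ge0 i (k : 'I_m) j :
  (size h <= k)%N -> 0 <= nth p0 (play m (upd bidding i d) h) k j.
Proof. by apply: play_bids_ge0 => //; apply: upd_valid => //; apply: bidding_valid. Qed.

Lemma rival_bid i j (k : 'I_m) : j != i -> (size h <= k)%N ->
  nth p0 (play m (upd bidding i d) h) k j =
    bidding j (take k (play m (upd bidding i d) h)).
Proof. by move=> ji hk; rewrite nth_play_new ?hk ?h_le ?ltn_ord // /upd (negbTE ji). Qed.

Lemma single_deviation k :
  utility_from (size h) (play m (upd bidding (single k) d) h) (single k) <=
  utility_from (size h) (play m bidding h) (single k).
Proof.
have pf_ge0 := paid_from_ge0 seller_tb (deviation_bids_ge0 (single k)) (single k).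
set H' := play m _ h in pf_ge0 *; rewrite /utility_from paid_from_bidding //.
rewrite (negbTE (single_neq_greedy k)) subr0 !ud_vals_single !mem_won1.
have [kh|hk] := ltnP k (size h).
  by rewrite !winner_play_old //; lra.
case: (boolP (greedy_won h || (size h < k)%N)) => later.
  rewrite (bidding_later h_lt hk later).1 eqxx /=.
  have : ((winner H' k == single k)%:R : R) <= 1 by rewrite lern1 leq_b1.
  lra.
move: later; rewrite negb_or -leqNgt => /andP[gw kh].
have ek : (k : nat) = size h by apply/eqP; rewrite eqn_leq kh hk.
have [w0 _] := bidding_first h_lt gw.
have -> : winner (play m bidding h) k = greedy.
  by rewrite -w0; congr (Defs.winner _ _ _); apply: val_inj.
rewrite [greedy == _]eq_sym (negbTE (single_neq_greedy k)) /=.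
case: eqP => [wk|_] /=; last by lra.
have greedy_bid : nth p0 H' k greedy = 1.
  rewrite rival_bid 1?eq_sym ?single_neq_greedy ?hk // ek take_play.
  by rewrite /bidding (negbTE gw) eqxx.
have := le_paid_from (deviation_bids_ge0 (single k)) greedy seller_tb_valid hk wk.
rewrite greedy_bid; lra.
Qed.

Lemma greedy_deviation :
  utility_from (size h) (play m (upd bidding greedy d) h) greedy <=
  utility_from (size h) (play m bidding h) greedy.
Proof.
rewrite [leRHS]utility_from_bidding_greedy //.
have pf_ge0 := paid_from_ge0 seller_tb (deviation_bids_ge0 greedy) greedy.
set H' := play m _ h in pf_ge0 *; rewrite /utility_from ud_vals_greedy.
have won_le1 : ((won H' greedy != set0)%:R : R) <= 1 by rewrite lern1 leq_b1.
case: (boolP (greedy_won h)) => gw /=; rewrite ?mulr1n ?mulr0n; first by lra.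
have [->|[t]] := set_0Vmem (won H' greedy); first by rewrite eqxx /= mulr0n; lra.
rewrite mem_won1 => wt.
case: (arg_minnP (P := fun t => winner H' t == greedy) val wt) => t0 /eqP wt0 t0_min.
have ht0 : (size h <= t0)%N.
  rewrite leqNgt; apply: contra gw => t0h.
  rewrite (greedy_won_playE (upd bidding greedy d) h_le).
  by apply/existsP; exists t0; rewrite t0h wt0 eqxx.
have fresh : ~~ greedy_won (take t0 H').
  rewrite greedy_won_take ?leq_size_play ?h_le //.
  apply/existsP => -[t' /andP[t't0 wt']].
  by have := t0_min t' wt'; rewrite leqNgt t't0.
have single_bid : nth p0 H' t0 (single t0) = 1.
  rewrite rival_bid ?single_neq_greedy // /bidding (negbTE fresh).
  by rewrite size_takel ?leq_size_play ?h_le // eqxx orbT.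
have := le_paid_from (deviation_bids_ge0 greedy) (single t0) seller_tb_valid ht0 wt0.
rewrite single_bid; lra.
Qed.

End Deviation.

Lemma bidding_SPE : SPE vals 1 seller_tb bidding.
Proof.
split=> [|h _ h_lt i d d_valid]; first exact: bidding_valid.
apply: utility_play_le.
by case: (buyerP i) => [k|]; [apply: single_deviation | apply: greedy_deviation].
Qed.

Lemma revenue_bidding : (0 < m)%N -> revenue m seller_tb bidding = 1.
Proof.
move=> m_gt0; have fresh : ~~ greedy_won [::] by apply/existsP => -[].
rewrite /revenue (bigD1 (Ordinal m_gt0)) //= (@bidding_first [::] m_gt0 fresh).2.
rewrite big1 ?addr0 // => k k_pos; apply: (@bidding_later [::] m_gt0 _ _ _).2 => //.
by rewrite (negbTE fresh) lt0n.
Qed.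

End Construction.

Theorem mainTheorem13 (R : realType) (m : nat) : (1 <= m)%N ->
  exists v : 'I_m.+1 -> 'I_m -> R,
    (forall i j, 0 <= v i j) /\
    (exists p : 'I_m -> R,
        min_walrasian_prices v p /\ \sum_(j < m) p j = m%:R) /\
    (exists (sigma : {perm 'I_m}) (tb : tiebreak R m.+1)
            (s : 'I_m.+1 -> strategy R m.+1),
        valid_tiebreak tb /\ SPE v sigma tb s /\ revenue m tb s = 1).
Proof.
move=> m_gt0; exists (@vals R m); split; first exact: vals_ge0.
split.
  exists (fun=> 1); split; last by rewrite sumr_const card_ord.
  split; first by exists (@single m); exact: walrasian_unit_prices.
  exact: walrasian_prices_ge1.
exists 1%g, (@seller_tb R m), (@bidding R m).
by split; [exact: seller_tb_valid | split; [exact: bidding_SPE | exact: revenue_bidding]].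
Qed.
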